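(* Let $G$ be a finite Abelian group given by its Cayley multiplication table, where each entry of the table can be accessed in constant time. There exists a deterministic algorithm that runs in time $\tilde O(|G|)$ and finds a set of generators $A$ of $G$ with $|A|\le\log|G|$.
   Context: $\tilde O$ hides polylogarithmic factors in $|G|$; $\log$ is base 2. *)

(* A simple unit-cost RAM model with oracle access to a
   Cayley table (each table lookup costs one step). *)
From mathcomp Require Import all_boot all_fingroup.
Set Implicit Arguments. Unset Strict Implicit. Unset Printing Implicit Defensive.

Inductive instr : Type :=
  | IConst of nat & nat
  | IAdd   of nat & nat & nat
  | ISub   of nat & nat & nat    (* ISub d a b   : r_d := r_a - r_b (truncated) *)
  | ILoad  of nat & nat
  | IStore of nat & nat
  | ITab   of nat & nat & nat
  | IJlt   of nat & nat & nat
  | IJmp   of nat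
  | IHalt.

Definition program := seq instr.

Record state := State { pc : nat; mem : nat -> nat }.

Definition upd (m : nat -> nat) (a v : nat) : nat -> nat :=
  fun x => if x == a then v else m x.

(* table oracle on nat labels; out-of-range queries return 0 *)
Definition tabN (n : nat) (tab : 'I_n -> 'I_n -> 'I_n) (a b : nat) : nat :=
  match @insub nat (fun x => x < n) 'I_n a, @insub nat (fun x => x < n) 'I_n b with
  | Some i, Some j => val (tab i j)
  | _, _ => 0
  end.

(* One step; None means the machine has halted (IHalt or pc out of range). *)
Definition step (P : program) (n : nat) (tab : 'I_n -> 'I_n -> 'I_n)
  (s : state) : option state :=
  let m := mem s in
  let next m' := Some (State (pc s).+1 m') in
  match nth IHalt P (pc s) with
  | IConst d v => next (upd m d v)
  | IAdd d a b => next (upd m d (m a + m b))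
  | ISub d a b => next (upd m d (m a - m b))
  | ILoad d a => next (upd m d (m (m a)))
  | IStore a s' => next (upd m (m a) (m s'))
  | ITab d a b => next (upd m d (tabN tab (m a) (m b)))
  | IJlt a b l => if m a < m b then Some (State l m) else next m
  | IJmp l => Some (State l m)
  | IHalt => None
  end.

(* run P tab t s = Some m  iff the machine halts within t steps (the final
   halting step included) with final memory m. *)
Fixpoint run (P : program) (n : nat) (tab : 'I_n -> 'I_n -> 'I_n)
  (fuel : nat) (s : state) : option (nat -> nat) :=
  match fuel with
  | 0 => None
  | fuel'.+1 =>
      match step P tab s with
      | None => Some (mem s)
      | Some s' => run P tab fuel' s'
      end
  end.

(* Initial state: pc = 0, r_0 = n (the group order), all other registers 0. *)
Definition init (n : nat) : state := State 0 (fun x => if x == 0 then n else 0).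

(* Scan the indices of G in order, keeping the list L of the indices of the
   subgroup H = <A> generated by the generators A chosen so far, together with
   an array of visited flags for constant-time membership tests.  When the
   candidate c is not visited it becomes a new generator.  Since G is abelian,
   <A, c> is the smallest set containing H that is closed under right
   multiplication by c, so a single pass over L that appends the products
   y * c not yet visited computes it, in time O(n).  H is a proper subgroup
   of <A, c>, so by Lagrange |<A, c>| >= 2 |H|; hence 2 ^ |A| <= |<A>| <= n
   throughout, |A| <= log n, and the whole scan costs O(n log n) steps. *)

From Pilot Require Import Defs.
From mathcomp Require Import all_boot all_fingroup zify.
Set Implicit Arguments. Unset Strict Implicit. Unset Printing Implicit Defensive.

Section GroupFacts.
Variable gT : finGroupType.
Local Open Scope group_scope.
Implicit Types (B X : {set gT}) (H K : {group gT}).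

Lemma proper_card_mul2 H K : H \proper K -> #|H| * 2 <= #|K|.
Proof. by case/andP=> sHK nsKH; rewrite -(Lagrange sHK) leq_mul2l indexg_gt1 nsKH orbT. Qed.

Lemma mulg_closed_gen_setU1 B X x : x \in 'C(B) -> <<B>> \subset X ->
  X \subset <<B :|: [set x]>> -> {in X, forall y, y * x \in X} -> X = <<B :|: [set x]>>.
Proof.
move=> cBx sBX sXBx mulXx; apply/eqP; rewrite eqEsubset sXBx /=.
have cBx_gen : commute <<B>> <[x]>.
  have sBCx : <<B>> \subset 'C[x] by rewrite gen_subG sub_cent1.
  by apply/normC/cents_norm; rewrite cent_cycle.
rewrite -joingE -joing_idl -joing_idr comm_joingE //.
apply/subsetP=> _ /mulsgP[y _ By /cycleP[i ->] ->].
elim: i => [|i IHi]; first by rewrite mulg1 (subsetP sBX).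
by rewrite expgSr mulgA mulXx.
Qed.
End GroupFacts.

Section Machine.
Variables (P : program) (n : nat) (tab : 'I_n -> 'I_n -> 'I_n).

Fixpoint exec t s : option state :=
  if t is t'.+1 then (if step P tab s is Some s' then exec t' s' else None) else Some s.

Lemma exec_addn t1 t2 s : exec (t1 + t2) s = obind (exec t2) (exec t1 s).
Proof. by elim: t1 s => [|t IHt] s //=; case: (step P tab s). Qed.

Lemma run_exec t f s s' : exec t s = Some s' -> run P tab (t + f) s = run P tab f s'.
Proof.
elim: t s => [|t IHt] s /=; first by case=> ->.
by case: (step P tab s) => // s1 /IHt.
Qed.

Definition reach s (Q : state -> Prop) b :=
  exists t s', [/\ t <= b, exec t s = Some s' & Q s'].

Lemma reach_now s (Q : state -> Prop) b : Q s -> reach s Q b.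
Proof. by exists 0, s. Qed.

Lemma reach_step s s1 Q b : step P tab s = Some s1 -> reach s1 Q b -> reach s Q b.+1.
Proof. by move=> Es [t [s' [le_tb Et Qs']]]; exists t.+1, s'; rewrite /= Es. Qed.

Lemma reach_le s Q b b' : b <= b' -> reach s Q b -> reach s Q b'.
Proof.
by move=> le_bb' [t [s' [le_tb Et Qs']]]; exists t, s'; split=> //; apply: leq_trans le_bb'.
Qed.

Lemma reach_conseq s (Q R : state -> Prop) b :
  (forall s', Q s' -> R s') -> reach s Q b -> reach s R b.
Proof. by move=> QR [t [s' [le_tb Et /QR Rs']]]; exists t, s'. Qed.

Lemma reach_seq s Q R b1 b2 :
  reach s Q b1 -> (forall s', Q s' -> reach s' R b2) -> reach s R (b1 + b2).
Proof.
move=> [t1 [s1 [le_tb1 Et1 /[swap] /[apply] [[t2 [s2 [le_tb2 Et2 Rs2]]]]]]].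
by exists (t1 + t2), s2; rewrite exec_addn Et1 leq_add.
Qed.

Lemma reach_loop (I Q : state -> Prop) (phi : state -> nat) d s : I s ->
  (forall s, I s -> reach s Q d \/
     exists2 b, 0 < b & reach s (fun s' => I s' /\ b + phi s' <= phi s) b) ->
  reach s Q (phi s + d).
Proof.
move=> Is body; have [k] := ubnP (phi s); elim: k s Is => // k IHk s Is lt_phi.
case: (body s Is) => [/(reach_le (leq_addl _ _)) //|[b b_gt0 reach_I]].
have -> : phi s + d = b + (phi s - b + d).
  by case: reach_I => [t [s' [_ _ [_ le_phi]]]]; lia.
apply: reach_seq reach_I _ => s' [Is' le_phi].
by apply: reach_le (IHk s' Is' _); lia.
Qed.

Lemma run_of_reach s (Q : (nat -> nat) -> Prop) b fuel :
  reach s (fun s' => step P tab s' = None /\ Q (Defs.mem s')) b -> b < fuel ->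
  exists2 m, run P tab fuel s = Some m & Q m.
Proof.
move=> [t [s' [le_tb Et [halt Qs']]]] lt_b_fuel; exists (Defs.mem s') => //.
have -> : fuel = t + (fuel - t).-1.+1 by lia.
by rewrite (run_exec _ Et) /= halt.
Qed.

Section Instructions.
Variables (p : nat) (m : nat -> nat).
Lemma step_const d v : nth IHalt P p = IConst d v ->
  step P tab (State p m) = Some (State p.+1 (upd m d v)).
Proof. by rewrite /step /= => ->. Qed.
Lemma step_add d a b : nth IHalt P p = IAdd d a b ->
  step P tab (State p m) = Some (State p.+1 (upd m d (m a + m b))).
Proof. by rewrite /step /= => ->. Qed.
Lemma step_sub d a b : nth IHalt P p = ISub d a b ->
  step P tab (State p m) = Some (State p.+1 (upd m d (m a - m b))).
Proof. by rewrite /step /= => ->. Qed.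
Lemma step_load d a : nth IHalt P p = ILoad d a ->
  step P tab (State p m) = Some (State p.+1 (upd m d (m (m a)))).
Proof. by rewrite /step /= => ->. Qed.
Lemma step_store a s : nth IHalt P p = IStore a s ->
  step P tab (State p m) = Some (State p.+1 (upd m (m a) (m s))).
Proof. by rewrite /step /= => ->. Qed.
Lemma step_tab d a b : nth IHalt P p = ITab d a b ->
  step P tab (State p m) = Some (State p.+1 (upd m d (tabN tab (m a) (m b)))).
Proof. by rewrite /step /= => ->. Qed.
Lemma step_jmp l : nth IHalt P p = IJmp l ->
  step P tab (State p m) = Some (State l m).
Proof. by rewrite /step /= => ->. Qed.
Lemma step_jlt_taken a b l : nth IHalt P p = IJlt a b l -> m a < m b ->
  step P tab (State p m) = Some (State l m).
Proof. by rewrite /step /= => -> ->. Qed.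
Lemma step_jlt_not_taken a b l : nth IHalt P p = IJlt a b l -> m b <= m a ->
  step P tab (State p m) = Some (State p.+1 m).
Proof. by rewrite /step /= => -> le_ba; rewrite ltnNge le_ba. Qed.
Lemma step_halt : nth IHalt P p = IHalt ->
  step P tab (State p m) = None.
Proof. by rewrite /step /= => ->. Qed.
End Instructions.
End Machine.

Definition at_pc p (R : (nat -> nat) -> Prop) (s : state) := pc s = p /\ R (Defs.mem s).

Lemma updE m a v x : upd m a v x = if x == a then v else m x.
Proof. by []. Qed.

Lemma tabN_ord n (tab : 'I_n -> 'I_n -> 'I_n) (i j : 'I_n) : tabN tab i j = tab i j.
Proof. by rewrite /tabN !valK. Qed.

Ltac simpl_state := match goal with
  |- reach _ _ (State _ ?m) _ _ => let m' := eval simpl in m in change m with m' end.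
Ltac step1 := apply: reach_step; [ first [ apply: step_const; reflexivity
  | apply: step_add; reflexivity | apply: step_sub; reflexivity
  | apply: step_load; reflexivity | apply: step_store; reflexivity
  | apply: step_tab; reflexivity | apply: step_jmp; reflexivity ] | simpl_state ].
Ltac jump := apply: reach_step; [ apply: step_jlt_taken; [reflexivity | ] | ].
Ltac no_jump := apply: reach_step; [ apply: step_jlt_not_taken; [reflexivity | ] | ].
Ltac decide_reg_eqs := repeat match goal with
  | |- context [?x == ?y :> nat] =>
      (have ->: (x == y) = false by apply/eqP; lia) || (have ->: (x == y) = true by apply/eqP; lia)
  end.
Ltac eval_regs := rewrite /= ?updE /=; decide_reg_eqs.

Definition output_block : seq instr :=
  flatten [seq [:: IConst (15 - j) (15 - j); IAdd (15 - j) (15 - j) 0; ILoad (15 - j) (15 - j)]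
          | j <- iota 0 15].

(* Registers: r0 = n on entry; r1 = n, r11 = 1, r12 = 0; r2 = |A| and r3 = |L|,
   where A is the list of generators found so far and L the list of visited
   indices; r4 = current candidate; r5 = cursor of the pass over L, then output index;
   r8, r9, r10 are scratch.  Arrays: the visited flag of x at 16 + n + x
   (base r6), L_i at 16 + 2n + i (base r7), A_j at 16 + 3n + j + 1 (base r13). *)
Definition prog : program := [::
  IConst 11 1; IAdd 1 0 12; IConst 8 16; IAdd 6 8 1; IAdd 7 6 1; IAdd 13 7 1; IConst 4 0;
  (* 7: find the index r4 of the identity, i.e. with tab r4 r4 = r4 *)
  ITab 8 4 4; IJlt 8 4 11; IJlt 4 8 11; IJmp 13;
  IAdd 4 4 11; IJmp 7;
  (* 13: L := [:: r4], then scan the candidates r4 = 0, 1, ... *)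
  IAdd 8 6 4; IStore 8 11; IStore 7 4; IConst 3 1; IConst 2 0; IConst 4 0;
  IJlt 4 1 21; IJmp 49;
  IAdd 8 6 4; ILoad 9 8; IJlt 12 9 47;
  (* 24: r4 is not visited: append it to A and to L *)
  IAdd 2 2 11; IAdd 8 13 2; IStore 8 4; IAdd 8 6 4; IStore 8 11; IAdd 8 7 3; IStore 8 4;
  IAdd 3 3 11; IConst 5 0;
  (* 33: close L under multiplication by r4 *)
  IJlt 5 3 35; IJmp 47;
  IAdd 8 7 5; ILoad 9 8; ITab 9 9 4; IAdd 8 6 9; ILoad 10 8; IAdd 5 5 11; IJlt 12 10 33;
  IStore 8 11; IAdd 8 7 3; IStore 8 9; IAdd 3 3 11; IJmp 33;
  (* 47: next candidate *)
  IAdd 4 4 11; IJmp 19;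
  (* 49: output |A| in r0 and A_j in r_j, by a loop for j > 15, then by
     straight-line code for the registers j <= 15 that the loop itself uses *)
  IAdd 0 13 12; IStore 0 2; IAdd 5 2 12;
  IConst 8 15; IJlt 8 5 55; IJmp 60;
  IAdd 9 0 5; ILoad 10 9; IStore 5 10; ISub 5 5 11; IJmp 52]
  ++ output_block ++ [:: ILoad 0 0; IHalt].

Record layout n (m : nat -> nat) : Prop := Layout {
  reg_n : m 1 = n; reg_marks : m 6 = 16 + n; reg_list : m 7 = 16 + n + n;
  reg_one : m 11 = 1; reg_zero : m 12 = 0; reg_gens : m 13 = 16 + n + n + n }.

Definition scratch_reg d := d \in [:: 4; 5; 8; 9; 10].

Definition set_up n m := layout n m /\ forall a, 16 <= a -> m a = 0.

Lemma layout_upd n m (d : nat) v : scratch_reg d -> layout n m -> layout n (upd m d v).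
Proof. by rewrite /scratch_reg !inE => sd [*]; constructor; eval_regs. Qed.

Lemma set_up_upd n m (d : nat) v : scratch_reg d -> set_up n m -> set_up n (upd m d v).
Proof.
move=> sd [/(layout_upd v sd) lay zero]; split=> // a le_16a.
by move: sd; rewrite /scratch_reg !inE => sd; eval_regs; apply: zero.
Qed.

Lemma reach_set_up n (tab : 'I_n -> 'I_n -> 'I_n) :
  reach prog tab (init n) (at_pc 7 (fun m => set_up n m /\ m 4 = 0)) 7.
Proof.
rewrite /init; do 7 step1; apply: reach_now; split=> //; split; last by eval_regs.
by split; [constructor; eval_regs; rewrite ?addn0 | move=> a le_16a; eval_regs].
Qed.

Section Output.
Variables (n : nat) (tab : 'I_n -> 'I_n -> 'I_n) (K : nat) (a : nat -> nat).
Hypothesis lt_K : K < 16 + n.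
Local Notation AB := (16 + n + n + n).
Local Notation gens_stored m := (forall j, 0 < j <= K -> m (AB + j) = a j).

Definition copying_high i m := [/\ m 0 = AB, m 11 = 1, m 5 = i, i <= K & m AB = K] /\
  gens_stored m /\ forall j, i < j <= K -> m j = a j.

Definition high_copied m := [/\ m 0 = AB, m AB = K, gens_stored m &
  forall j, 15 < j <= K -> m j = a j].

Lemma copy_high_next i m : 15 < i -> copying_high i m ->
  reach prog tab (State 52 m) (at_pc 52 (copying_high i.-1)) 7.
Proof.
move=> lt_15i [[r0 r11 r5 le_iK rAB] [stored copied]].
step1; jump; first by eval_regs; rewrite r5.
step1; eval_regs; rewrite r0 r5. step1; eval_regs; rewrite stored; last by lia.
step1; eval_regs; rewrite r5. step1; eval_regs; rewrite r5 r11 subn1. step1.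
apply: reach_now; split=> //; split; first by split; eval_regs; rewrite ?r0 ?r11 ?rAB //; lia.
split=> [j lt_jK|j lt_jK]; eval_regs; first exact: stored.
by case: ltngtP => [lt|gt|->]; [lia | eval_regs; apply: copied; lia | eval_regs].
Qed.

Lemma copy_high_done i m : i <= 15 -> copying_high i m ->
  reach prog tab (State 52 m) (at_pc 60 high_copied) 3.
Proof.
move=> le_i15 [[r0 r11 r5 le_iK rAB] [stored copied]].
step1; no_jump; first by eval_regs; rewrite r5.
step1; apply: reach_now; split=> //; split=> // j lt_jK; eval_regs.
  by [apply: stored; lia | apply: copied; lia].
Qed.

Lemma copy_high i m : copying_high i m ->
  reach prog tab (State 52 m) (at_pc 60 high_copied) (7 * (i - 15) + 3).
Proof.
move=> inv; have [[_ _ r5 _ _] _] := inv; rewrite -r5.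
apply: (reach_loop (I := at_pc 52 (fun m => copying_high (m 5) m))
                   (phi := fun s => 7 * (Defs.mem s 5 - 15))%N); first by rewrite /at_pc /= r5.
move=> [_ m'] [/= -> inv']; have [lt|le] := ltnP 15 (m' 5); last first.
  by left; apply: copy_high_done inv'.
right; exists 7 => //; apply: reach_conseq (copy_high_next lt inv').
move=> [_ m''] [/= -> inv'']; have [[_ _ r5'' _ _] _] := inv''.
by rewrite /at_pc /= r5''; split; [split | lia].
Qed.

Lemma prog_output_block k : k < 15 ->
  [/\ nth IHalt prog (105 - 3 * k.+1) = IConst k.+1 k.+1,
      nth IHalt prog (105 - 3 * k.+1).+1 = IAdd k.+1 k.+1 0 &
      nth IHalt prog (105 - 3 * k.+1).+2 = ILoad k.+1 k.+1].
Proof. by do 15 (case: k => [|k]; first by split). Qed.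

Definition low_copied m k m' := m' 0 = AB /\
  forall x, 0 < x -> m' x = if k < x <= 15 then m (AB + x) else m x.

Lemma copy_low k m m' : k <= 15 -> low_copied m k m' ->
  reach prog tab (State (105 - 3 * k) m') (at_pc 105 (low_copied m 0)) (3 * k).
Proof.
elim: k m' => [|k IHk] m' le_k15 [r0 low]; first exact: reach_now.
have [I1 I2 I3] := prog_output_block le_k15.
apply: (reach_le (b := (3 * k).+3)); first by rewrite mulnS.
apply: reach_step (step_const _ _ I1) _; apply: reach_step (step_add _ _ I2) _.
apply: reach_step (step_load _ _ I3) _.
have -> : (105 - 3 * k.+1).+3 = 105 - 3 * k by lia.
apply: IHk; first lia.
split=> [|x x_gt0]; eval_regs; rewrite r0 //.
case: (eqVneq x k.+1) => [->|ne_xk]; eval_regs.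
  by rewrite [k.+1 + _]addnC low; [do 2 case: ifP => //; lia | lia].
by rewrite low //; congr (if _ then _ else _); apply/idP/idP; lia.
Qed.

Lemma reach_output m : layout n m -> m 2 = K -> gens_stored m ->
  reach prog tab (State 49 m)
    (at_pc 106 (fun m' => m' 0 = K /\ forall j, 0 < j <= K -> m' j = a j)) (7 * K + 60).
Proof.
move=> [_ _ _ r11 r12 r13] r2 stored.
apply: (reach_le (b := 3 + ((7 * (K - 15) + 3) + (3 * 15 + 1)))); first lia.
step1; eval_regs; rewrite r13 r12 addn0. step1; eval_regs; rewrite r2.
step1; eval_regs; rewrite r2 r12 addn0.
apply: reach_seq.
  apply: copy_high; split; first by split=> //; eval_regs.
  by split=> [j lt_jK|j]; [eval_regs; apply: stored | lia].
move=> [_ m'] [/= -> [r0 rAB stored' high]].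
apply: reach_seq (copy_low (m := m') (leqnn 15) _) _.
  by split=> // x x_gt0; case: ifP => //; lia.
move=> [_ m''] [/= -> [r0'' low]].
apply: reach_step (step_load _ _ (erefl : nth IHalt prog 105 = ILoad 0 0)) _.
apply: reach_now; split=> //=; split.
  by eval_regs; rewrite r0'' low ?ifF.
move=> j lt_jK; eval_regs; rewrite low; last by lia.
by case: ifP => [_|/negbT le15]; [apply: stored' | apply: high]; lia.
Qed.
End Output.

Lemma output_seq (s : seq nat) m : m 0 = size s ->
  (forall j, 0 < j <= size s -> m j = nth 0 s j.-1) -> s = [seq m i | i <- iota 1 (m 0)].
Proof.
move=> r0 ms; rewrite r0; apply: (@eq_from_nth _ 0); first by rewrite size_map size_iota.
by move=> i lt_is; rewrite (nth_map 0) ?size_iota // nth_iota // add1n ms.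
Qed.

Record encodes n m (L A : seq 'I_n) : Prop := Encodes {
  enc_layout : layout n m;
  enc_ngens : m 2 = size A;
  enc_nlist : m 3 = size L;
  enc_uniq : uniq L;
  enc_marks : forall x : 'I_n, m (16 + n + x) = (x \in L);
  enc_list : forall i, i < size L -> m (16 + n + n + i) = nth 0 [seq val x | x <- L] i;
  enc_gens : forall j, j < size A -> m (16 + n + n + n + j.+1) = nth 0 [seq val x | x <- A] j }.

Lemma size_uniq_ord n (L : seq 'I_n) : uniq L -> size L <= n.
Proof. by move/card_uniqP <-; apply: leq_trans (max_card _) _; rewrite card_ord. Qed.

Lemma size_uniq_ord_lt n (L : seq 'I_n) y : uniq L -> y \notin L -> size L < n.
Proof.
move=> uL yL; have: [set x in L] \proper [set: 'I_n].
  by rewrite properT; apply/eqP => /setP/(_ y); rewrite !inE (negbTE yL).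
by move/proper_card; rewrite cardsT card_ord cardsE (card_uniqP uL).
Qed.

Lemma encodes_upd n m (L A : seq 'I_n) (d : nat) v :
  scratch_reg d -> encodes m L A -> encodes (upd m d v) L A.
Proof.
move=> sd [lay r2 r3 uL marks list gens]; move: (sd); rewrite /scratch_reg !inE => d_scr.
constructor=> //; first exact: layout_upd.
- by eval_regs.
- by eval_regs.
- by move=> x; eval_regs.
- by move=> i lt_iL; eval_regs; apply: list.
- by move=> j lt_jA; eval_regs; apply: gens.
Qed.

Lemma encodes_visit n m (L A : seq 'I_n) (y : 'I_n) v : y \notin L -> encodes m L A ->
  encodes (upd (upd (upd (upd m (16 + n + y) 1) 8 v) (16 + n + n + size L) y) 3 (size L).+1)
          (rcons L y) A.
Proof.
move=> yL [[r1 r6 r7 r11 r12 r13] r2 r3 uL marks list gens].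
have lt_Ln := size_uniq_ord_lt uL yL; have lt_yn := ltn_ord y.
constructor; first (by constructor; eval_regs); try by eval_regs; rewrite ?size_rcons.
- by rewrite rcons_uniq yL.
- move=> x; have lt_xn := ltn_ord x; eval_regs.
  by rewrite mem_rcons inE -val_eqE eqn_add2l; case: eqP => //=; eval_regs.
- move=> i; rewrite size_rcons ltnS leq_eqVlt map_rcons nth_rcons size_map.
  by case/orP => [/eqP ->|lt_iL]; eval_regs; rewrite ?ltnn ?eqxx ?lt_iL ?list.
- by move=> j lt_jA; eval_regs; apply: gens.
Qed.

Lemma encodes_push_gen n m (L A : seq 'I_n) (g : 'I_n) v : encodes m L A ->
  encodes (upd (upd (upd m 2 (size A).+1) 8 v) (16 + n + n + n + (size A).+1) g) L (rcons A g).
Proof.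
move=> [[r1 r6 r7 r11 r12 r13] r2 r3 uL marks list gens].
have le_Ln := size_uniq_ord uL.
constructor; first (by constructor; eval_regs); try by eval_regs; rewrite ?size_rcons.
- by move=> x; have lt_xn := ltn_ord x; eval_regs.
- by move=> i lt_iL; eval_regs; apply: list.
- move=> j; rewrite size_rcons ltnS leq_eqVlt map_rcons nth_rcons size_map.
  by case/orP => [/eqP ->|lt_jA]; eval_regs; rewrite ?ltnn ?eqxx ?lt_jA ?gens.
Qed.

Import GroupScope.

Section IdentitySearch.
Variables (gT : finGroupType) (n : nat) (e : 'I_n -> gT) (tab : 'I_n -> 'I_n -> 'I_n).
Hypotheses (e_inj : injective e) (e_tab : forall i j, e (tab i j) = e i * e j).
Variable i0 : 'I_n.
Hypothesis e_i0 : e i0 = 1.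

Lemma tab_idem (x : 'I_n) : (tab x x == x) = (x == i0).
Proof.
apply/eqP/eqP => [xx_x|->]; last by apply: e_inj; rewrite e_tab e_i0 mulg1.
by apply: e_inj; rewrite e_i0; apply: (@mulgI _ (e x)); rewrite -e_tab xx_x mulg1.
Qed.

Lemma search_next m : set_up n m -> m 4 < i0 ->
  reach prog tab (State 7 m) (at_pc 7 (fun m' => set_up n m' /\ m' 4 = (m 4).+1)) 5.
Proof.
move=> su lt_x_i0; have lt_xn : m 4 < n := ltn_trans lt_x_i0 (ltn_ord i0).
have xx_neq_x : tabN tab (m 4) (m 4) != m 4.
  rewrite -[m 4]/(val (Ordinal lt_xn)) tabN_ord; apply/negP => /eqP/val_inj/eqP.
  by rewrite tab_idem => /eqP/(congr1 val) /=; lia.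
have incr : reach prog tab (State 11 (upd m 8 (tabN tab (m 4) (m 4))))
    (at_pc 7 (fun m' => set_up n m' /\ m' 4 = (m 4).+1)) 2.
  do 2 step1; apply: reach_now; split=> //=; split.
    by do 2 apply: set_up_upd => //.
  by eval_regs; case: su => [[_ _ _ -> _ _] _]; rewrite addn1.
step1; case: ltngtP xx_neq_x => // [lt|gt] _.
- by jump; [eval_regs | apply: reach_le incr].
- by no_jump; [eval_regs; apply: ltnW | jump; [eval_regs | ]].
Qed.

Lemma search_found m : set_up n m -> m 4 = i0 ->
  reach prog tab (State 7 m) (at_pc 13 (fun m' => set_up n m' /\ m' 4 = i0)) 4.
Proof.
move=> su x_i0; have xx_x : tabN tab (m 4) (m 4) = m 4.
  by rewrite x_i0 tabN_ord; congr nat_of_ord; apply/eqP; rewrite tab_idem.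
step1; no_jump; [by eval_regs; rewrite xx_x | no_jump; first by eval_regs; rewrite xx_x].
step1; apply: reach_now; split=> //; split; first exact: set_up_upd.
by eval_regs.
Qed.

Lemma find_identity m : set_up n m -> m 4 <= i0 ->
  reach prog tab (State 7 m) (at_pc 13 (fun m' => set_up n m' /\ m' 4 = i0)) (5 * (i0 - m 4) + 4).
Proof.
move=> su le_x_i0.
apply: (reach_loop (I := at_pc 7 (fun m => set_up n m /\ m 4 <= i0))
                   (phi := fun s => 5 * (i0 - Defs.mem s 4))%N) => // -[_ m'] [/= -> [su' le']].
have [lt|eq] : m' 4 < i0 \/ m' 4 = i0 by lia.
  right; exists 5 => //; apply: reach_conseq (search_next su' lt).
  by move=> -[_ m''] [/= -> [su'' next]]; rewrite /at_pc /= next; split; [split | lia].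
by left; apply: search_found.
Qed.
End IdentitySearch.

Section Algorithm.
Variables (gT : finGroupType) (G : {group gT}) (n : nat).
Variables (e : 'I_n -> gT) (tab : 'I_n -> 'I_n -> 'I_n).
Hypotheses (abG : abelian G) (e_inj : injective e) (e_onto : [set e i | i : 'I_n] = G)
  (e_tab : forall i j, e (tab i j) = e i * e j).

Definition gens (s : seq 'I_n) := [set e x | x in s].

Lemma mem_gens s x : (e x \in gens s) = (x \in s).
Proof. exact: mem_imset. Qed.

Lemma gens_rcons s x : gens (rcons s x) = gens s :|: [set e x].
Proof.
apply/setP => z; rewrite !inE; apply/imsetP/orP => [[y]|].
  by rewrite mem_rcons inE => /orP[/eqP-> ->|sy ->]; [right | left; apply: imset_f].
case=> [/imsetP[y sy ->]|/eqP->]; [exists y | exists x] => //.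
  by rewrite mem_rcons inE sy orbT.
by rewrite mem_rcons mem_head.
Qed.

Lemma gens_subset s t : {subset s <= t} -> gens s \subset gens t.
Proof. by move=> st; apply/imsetS/subsetP. Qed.

Lemma gens_sub s : gens s \subset G.
Proof. by rewrite -e_onto; apply: imsetS; apply/subsetP. Qed.

Lemma e_in_G x : e x \in G.
Proof. by rewrite -e_onto imset_f. Qed.

Lemma card_G : #|G| = n.
Proof. by rewrite -e_onto card_imset // card_ord. Qed.

Lemma card_gen_rcons A x : e x \notin <<gens A>> -> 2 ^ size A <= #|<<gens A>>| ->
  2 ^ size (rcons A x) <= #|<<gens (rcons A x)>>|.
Proof.
move=> xA card_A; have ltAx : <<gens A>> \proper <<gens (rcons A x)>>.
  rewrite properEneq genS ?gens_rcons ?subsetUl // andbT.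
  by apply: contraNneq xA => ->; rewrite mem_gen // inE set11 orbT.
rewrite size_rcons expnS mulnC; apply: leq_trans (proper_card_mul2 ltAx).
by rewrite leq_mul2r card_A orbT.
Qed.

Lemma size_gens_le_log A : 2 ^ size A <= #|<<gens A>>| -> size A <= trunc_log 2 n.
Proof.
move=> card_A; apply: trunc_log_max => //; apply: leq_trans card_A _.
by rewrite -[X in _ <= X]card_G subset_leq_card // gen_subG gens_sub.
Qed.

Lemma size_gens_lt_log A L x : gens L = <<gens A>> -> x \notin L ->
  2 ^ size A <= #|<<gens A>>| -> size A < trunc_log 2 n.
Proof.
move=> genL xL card_A; have ltAG : <<gens A>> \proper G.
  rewrite properEneq gen_subG gens_sub andbT; apply: contraNneq xL => genA.
  by rewrite -mem_gens genL genA e_in_G.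
apply: trunc_log_max => //; rewrite expnS mulnC -[X in _ <= X]card_G.
by apply: leq_trans (proper_card_mul2 ltAG); rewrite leq_mul2r card_A orbT.
Qed.

Lemma gens_mulg_closed A L x :
  <<gens A>> \subset gens L -> gens L \subset <<gens (rcons A x)>> ->
  {in gens L, forall y, y * e x \in gens L} -> gens L = <<gens (rcons A x)>>.
Proof.
rewrite gens_rcons => sAL sLAx mulLx; apply: mulg_closed_gen_setU1 => //.
exact: subsetP (subset_trans abG (centS (gens_sub A))) _ (e_in_G x).
Qed.

Section Closure.
Variables (A0 L0 : seq 'I_n) (g : 'I_n).
Hypothesis genL0 : gens L0 = <<gens A0>>.
Local Notation A := (rcons A0 g).

Definition closing_list i L := [/\ i <= size L, {subset L0 <= L}, g \in L,
  gens L \subset <<gens A>> & forall k, k < i -> tab (nth g L k) g \in L].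

Lemma closing_list_skip i L : closing_list i L -> i < size L ->
  tab (nth g L i) g \in L -> closing_list i.+1 L.
Proof.
case=> _ old gL sub cl lt_iL new; split=> // k; rewrite ltnS leq_eqVlt.
by case/orP=> [/eqP->|/cl].
Qed.

Lemma closing_list_add i L : closing_list i L -> i < size L ->
  closing_list i.+1 (rcons L (tab (nth g L i) g)).
Proof.
case=> _ old gL sub cl lt_iL; set y := tab _ g.
split; first by rewrite size_rcons ltnS ltnW.
- by move=> x /old; rewrite mem_rcons inE orbC => ->.
- by rewrite mem_rcons inE gL orbT.
- rewrite [gens (rcons L _)]gens_rcons subUset sub sub1set /y e_tab.
  apply: groupM; first by apply: (subsetP sub); rewrite mem_gens mem_nth.
  by rewrite mem_gen // mem_gens mem_rcons mem_head.
- move=> k; rewrite ltnS leq_eqVlt nth_rcons mem_rcons inE.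
  by case/orP=> [/eqP->|lt_ki]; rewrite ?lt_iL ?eqxx // (ltn_trans lt_ki lt_iL) cl ?orbT.
Qed.

Lemma closing_list_done L : closing_list (size L) L -> gens L = <<gens A>>.
Proof.
case=> _ old gL sub cl; apply: gens_mulg_closed => //; first by rewrite -genL0 gens_subset.
move=> _ /imsetP[y yL ->]; rewrite -e_tab mem_gens.
by have := cl (index y L); rewrite index_mem nth_index //; apply.
Qed.

Lemma closing_list_start : closing_list 0 (rcons L0 g).
Proof.
split=> //; first by move=> x xL; rewrite mem_rcons inE xL orbT.
  by rewrite mem_rcons mem_head.
rewrite [gens (rcons L0 g)]gens_rcons genL0 gens_rcons.
by rewrite subUset sub1set genS ?subsetUl // mem_gen // inE set11 orbT.
Qed.

Definition closing i m L := [/\ encodes m L A, m 4 = g, m 5 = i & closing_list i L].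

Lemma closing_next i m L : closing i m L -> i < size L ->
  reach prog tab (State 33 m) (at_pc 33 (fun m' => exists L', closing i.+1 m' L')) 13.
Proof.
move=> [enc r4 r5 sets] lt_iL; have [[_ r6 r7 r11 r12 _] _ r3 uL marks list _] := enc.
set y := nth g L i; set y' := tab y g.
have rLi : m (16 + n + n + i) = y by rewrite list // (nth_map g).
jump; first by rewrite r5 r3.
step1; eval_regs; rewrite r7 r5. step1; eval_regs; rewrite rLi.
step1; eval_regs; rewrite r4 tabN_ord -/y'. step1; eval_regs; rewrite r6.
step1; eval_regs; rewrite marks. step1; eval_regs; rewrite r5 r11 addn1.
case: (boolP (y' \in L)) => y'L.
  jump; first by eval_regs; rewrite r12.
  apply: reach_now; split=> //; exists L; split; eval_regs; rewrite ?r4 //.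
  - by do 6 apply: encodes_upd => //.
  - exact: closing_list_skip.
no_jump; first by eval_regs; rewrite r12.
step1; eval_regs. step1; eval_regs; rewrite r7 r3. step1; eval_regs.
step1; eval_regs; rewrite r3 r11 addn1. step1.
apply: reach_now; split=> //; exists (rcons L y'); split; eval_regs; rewrite ?r4 //.
- by apply: encodes_visit => //; do 6 apply: encodes_upd => //.
- exact: closing_list_add.
Qed.

Definition closure_found m L := [/\ encodes m L A, m 4 = g, {subset L0 <= L} & gens L = <<gens A>>].

Lemma close_under i m L : closing i m L ->
  reach prog tab (State 33 m) (at_pc 47 (fun m' => exists L', closure_found m' L'))
    (13 * (n - i) + 2).
Proof.
move=> inv; have [_ _ r5 _] := inv; rewrite -r5.
apply: (reach_loop (I := at_pc 33 (fun m => exists L, closing (m 5) m L))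
                   (phi := fun s => 13 * (n - Defs.mem s 5))%N).
  by split=> //=; exists L; rewrite r5.
move=> [_ m'] [/= -> [L' inv']]; have [enc' r4' _ sets'] := inv'.
have le_Ln := size_uniq_ord (enc_uniq enc').
have [lt_iL|le_Li] := ltnP (m' 5) (size L').
  right; exists 13 => //; apply: reach_conseq (closing_next inv' lt_iL).
  move=> [_ m''] [/= -> [L'' inv'']]; have [_ _ r5'' _] := inv''.
  by rewrite /at_pc /= r5''; split; [split=> //; exists L'' | lia].
left; no_jump; first by rewrite (enc_nlist enc').
have [le_iL old _ _ _] := sets'; have eq_iL : m' 5 = size L' by apply/eqP; rewrite eqn_leq le_iL.
step1; apply: reach_now; split=> //; exists L'.
by split=> //; apply: closing_list_done; rewrite -eq_iL.
Qed.
End Closure.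

Definition scanned C L A := [/\ C <= n, forall x : 'I_n, x < C -> x \in L,
  gens L = <<gens A>> & 2 ^ size A <= #|<<gens A>>|].

Definition scanning C m L A := [/\ encodes m L A, m 4 = C & scanned C L A].

Lemma scanned_skip C L A (lt_Cn : C < n) : scanned C L A -> Ordinal lt_Cn \in L ->
  scanned C.+1 L A.
Proof.
case=> _ below genL card_A cL; split=> // x; rewrite ltnS leq_eqVlt.
by case/orP=> [/eqP eq_xC|/below //]; rewrite (_ : x = Ordinal lt_Cn) //; apply: val_inj.
Qed.

Lemma scanned_add C L L' A (lt_Cn : C < n) : scanned C L A -> Ordinal lt_Cn \notin L ->
  {subset L <= L'} -> gens L' = <<gens (rcons A (Ordinal lt_Cn))>> ->
  scanned C.+1 L' (rcons A (Ordinal lt_Cn)).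
Proof.
set c := Ordinal lt_Cn; case=> _ below genL card_A cL sLL' genL'; have cL' : c \in L'.
  by rewrite -mem_gens genL' mem_gen // gens_rcons inE set11 orbT.
split=> //; last by apply: card_gen_rcons => //; rewrite -genL mem_gens.
move=> x; rewrite ltnS leq_eqVlt => /orP[/eqP eq_xC|/below/sLL' //].
by rewrite (_ : x = c) //; apply: val_inj.
Qed.

Lemma scan_visited C m L A (lt_Cn : C < n) : scanning C m L A -> Ordinal lt_Cn \in L ->
  reach prog tab (State 19 m) (at_pc 19 (fun m' => scanning C.+1 m' L A)) 6.
Proof.
move=> [enc r4 sc] cL; have [[r1 r6 _ r11 r12 _] _ _ _ marks _ _] := enc.
have rMC : m (16 + n + C) = (Ordinal lt_Cn \in L) := marks (Ordinal lt_Cn).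
jump; first by rewrite r4 r1.
step1; eval_regs; rewrite r6 r4. step1; eval_regs; rewrite rMC cL.
jump; first by eval_regs; rewrite r12.
step1; eval_regs; rewrite r4 r11 addn1. step1.
apply: reach_now; split=> //; split; eval_regs=> //; last exact: scanned_skip.
by do 3 apply: encodes_upd => //.
Qed.

Lemma scan_new C m L A (lt_Cn : C < n) : scanning C m L A -> Ordinal lt_Cn \notin L ->
  reach prog tab (State 19 m)
    (at_pc 19 (fun m' => exists L', scanning C.+1 m' L' (rcons A (Ordinal lt_Cn)))) (13 * n + 17).
Proof.
set c := Ordinal lt_Cn; move=> [enc r4 sc] cL.
have [[r1 r6 r7 r11 r12 r13] r2 r3 _ marks _ _] := enc.
have [_ _ genL _] := sc.
have rMC : m (16 + n + C) = (c \in L) := marks c.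
apply: (reach_le (b := 13 + ((13 * (n - 0) + 2) + 2))); first lia.
jump; first by rewrite r4 r1.
step1; eval_regs; rewrite r6 r4. step1; eval_regs; rewrite rMC (negbTE cL).
no_jump; first by eval_regs; rewrite r12.
step1; eval_regs; rewrite r2 r11 addn1. step1; eval_regs; rewrite r13. step1; eval_regs; rewrite r4.
step1; eval_regs; rewrite r6 r4. step1; eval_regs; rewrite r11. step1; eval_regs; rewrite r7 r3.
step1; eval_regs; rewrite r4. step1; eval_regs; rewrite r3 r11 addn1. step1.
apply: reach_seq (close_under (g := c) genL (L := rcons L c) _) _.
  split; eval_regs=> //; last exact: closing_list_start.
  apply: encodes_upd => //; apply: (encodes_visit (y := c)) => //; apply: encodes_upd => //.
  by apply: (encodes_push_gen c); do 2 apply: encodes_upd => //.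
move=> [_ m'] [/= -> [L' [enc' r4' sLL' genL']]].
step1; eval_regs; rewrite r4' (enc_layout enc').(reg_one) addn1. step1.
apply: reach_now; split=> //; exists L'; split; eval_regs=> //; first by apply: encodes_upd.
exact: (scanned_add sc cL sLL' genL').
Qed.

Lemma scan_all C m L A : scanning C m L A ->
  reach prog tab (State 19 m) (at_pc 49 (fun m' => exists L A, scanning n m' L A))
    (6 * (n - C) + (trunc_log 2 n - size A) * (13 * n + 17) + 2).
Proof.
move=> inv; have [enc r4 _] := inv; rewrite -r4 -(enc_ngens enc).
apply: (reach_loop (I := at_pc 19 (fun m => exists L A, scanning (m 4) m L A))
  (phi := fun s => 6 * (n - Defs.mem s 4) + (trunc_log 2 n - Defs.mem s 2) * (13 * n + 17))%N).
  by split=> //=; exists L, A; rewrite r4.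
move=> [_ m'] [/= -> [L' [A' inv']]]; have [enc' _ [le_Cn _ genL' card_A']] := inv'.
have [lt_Cn|le_nC] := ltnP (m' 4) n; last first.
  left; no_jump; first by rewrite (reg_n (enc_layout enc')).
  have eq_Cn : m' 4 = n by apply/eqP; rewrite eqn_leq le_Cn.
  by step1; apply: reach_now; split=> //; exists L', A'; rewrite -[X in scanning X]eq_Cn.
right; have [cL|cL] := boolP (Ordinal lt_Cn \in L').
  exists 6 => //; apply: reach_conseq (scan_visited inv' cL) => -[_ m''] [/= -> inv''].
  have [enc'' r4'' _] := inv''; rewrite /at_pc /= r4'' (enc_ngens enc'') (enc_ngens enc').
  by split; [split=> //; exists L', A' | lia].
have lt_log := size_gens_lt_log genL' cL card_A'.
exists (13 * n + 17); first lia.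
apply: reach_conseq (scan_new inv' cL) => -[_ m''] [/= -> [L'' inv'']].
have [enc'' r4'' _] := inv''; rewrite /at_pc /= r4'' (enc_ngens enc'') (enc_ngens enc') size_rcons.
split; first by split=> //; exists L'', (rcons A' (Ordinal lt_Cn)).
have -> : trunc_log 2 n - size A' = (trunc_log 2 n - (size A').+1).+1 by lia.
by rewrite mulSn; lia.
Qed.

Lemma gens_nil : gens [::] = set0.
Proof. by apply/setP => z; rewrite inE; apply/imsetP => -[]. Qed.

Lemma scan_start m (i0 : 'I_n) : e i0 = 1 -> set_up n m -> m 4 = i0 ->
  reach prog tab (State 13 m) (at_pc 19 (fun m' => scanning 0 m' [:: i0] [::])) 6.
Proof.
move=> e_i0 [[r1 r6 r7 r11 r12 r13] zero] r4; have lt_i0n := ltn_ord i0.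
step1; eval_regs; rewrite r6 r4. step1; eval_regs; rewrite r11. step1; eval_regs; rewrite r7 r4.
do 3 step1; apply: reach_now; split=> //; split; eval_regs=> //.
  constructor; try by eval_regs.
  - move=> x; have lt_xn := ltn_ord x; eval_regs; rewrite inE -val_eqE eqn_add2l.
    by case: eqP => _ //; eval_regs; apply: zero; lia.
  - by move=> i; rewrite ltnS leqn0 => /eqP ->; eval_regs.
split=> //; last by rewrite cardG_gt0.
by rewrite -[[:: i0]]/(rcons [::] i0) gens_rcons gens_nil set0U gen0 e_i0.
Qed.

Lemma scanned_gen L A : scanned n L A -> <<gens A>> = G.
Proof.
case=> _ below genL _; rewrite -genL -e_onto.
by apply/setP => z; apply/imsetP/imsetP => -[x _ ->]; exists x => //; apply: below.
Qed.

Definition gens_output m := exists A : seq 'I_n,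
  [/\ [seq val a | a <- A] = [seq m i | i <- iota 1 (m 0)],
      size A <= trunc_log 2 n & <<gens A>> = G].

Lemma scan_output m L A : scanning n m L A ->
  reach prog tab (State 49 m) (fun s => step prog tab s = None /\ gens_output (Defs.mem s))
    (7 * trunc_log 2 n + 60).
Proof.
move=> [enc _ sc]; have [_ _ _ card_A] := sc.
have lt_An : size A < 16 + n.
  apply: leq_trans (ltn_expl _ (ltnSn 1)) (leq_trans card_A (leq_trans _ (leq_addl 16 n))).
  by rewrite -[X in _ <= X]card_G subset_leq_card // gen_subG gens_sub.
apply: (reach_le (b := 7 * size A + 60)); first by rewrite leq_add2r leq_mul2l size_gens_le_log.
apply: reach_conseq (reach_output (a := fun j => nth 0 [seq val a | a <- A] j.-1) _ lt_An
                                  (enc_layout enc) (enc_ngens enc) _).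
  move=> [_ m'] [/= -> [r0 out]]; split; first exact: step_halt.
  exists A; split; last exact: scanned_gen sc.
  - by apply: output_seq; rewrite size_map.
  - exact: size_gens_le_log.
move=> j /andP[j_gt0 le_jA]; rewrite -(prednK j_gt0) (enc_gens enc) //.
by rewrite -ltnS prednK.
Qed.

Lemma prog_halts : reach prog tab (init n)
  (fun s => step prog tab s = None /\ gens_output (Defs.mem s))
  (79 + 11 * n + trunc_log 2 n * (13 * n + 24)).
Proof.
have [i0 e_i0] : exists i0, e i0 = 1.
  by move: (group1 G); rewrite -e_onto => /imsetP[i0 _ /esym]; exists i0.
set T := trunc_log 2 n.
have found : reach prog tab (init n) (at_pc 13 (fun m => set_up n m /\ m 4 = i0))
    (7 + (5 * i0 + 4)).
  apply: reach_seq (reach_set_up tab) _ => -[_ m] [/= -> [su r4]].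
  have le_0i : m 4 <= i0 by rewrite r4.
  by apply: reach_le (find_identity e_inj e_tab e_i0 su le_0i); rewrite r4 subn0.
have started : reach prog tab (init n) (at_pc 19 (fun m => scanning 0 m [:: i0] [::]))
    (7 + (5 * i0 + 4) + 6).
  by apply: reach_seq found _ => -[_ m] [/= -> [su r4]]; apply: scan_start.
have scanned : reach prog tab (init n) (at_pc 49 (fun m => exists L A, scanning n m L A))
    (7 + (5 * i0 + 4) + 6 + (6 * n + T * (13 * n + 17) + 2)).
  apply: reach_seq started _ => -[_ m] [/= -> inv].
  by apply: reach_le (scan_all inv); rewrite !subn0.
have halts s : at_pc 49 (fun m => exists L A, scanning n m L A) s ->
    reach prog tab s (fun s => step prog tab s = None /\ gens_output (Defs.mem s)) (7 * T + 60).
  by case: s => _ m [/= -> [L [A inv]]]; apply: scan_output inv.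
by apply: reach_le (reach_seq scanned halts); have := ltn_ord i0; lia.
Qed.

Lemma prog_run :
  exists2 m, run prog tab (100 * n * (trunc_log 2 n).+1 ^ 1 + 100) (init n) = Some m
    & gens_output m.
Proof.
apply: run_of_reach prog_halts _; rewrite expn1.
have n_gt0 : 0 < n by rewrite -card_G cardG_gt0.
have le_Tn : trunc_log 2 n <= n by apply: leq_trans (ltnW (ltn_expl _ (ltnSn 1))) (trunc_logP _ _).
nia.
Qed.
End Algorithm.

Theorem mainTheorem5 :
  exists (P : program) (c k : nat),
  forall (gT : finGroupType) (G : {group gT}) (n : nat)
         (e : 'I_n -> gT) (tab : 'I_n -> 'I_n -> 'I_n),
    abelian G ->
    injective e ->
    [set e i | i : 'I_n] = G ->
    (forall i j, e (tab i j) = e i * e j) ->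
    exists (m : nat -> nat) (A : seq 'I_n),
      run P tab (c * n * (trunc_log 2 n).+1 ^ k + c) (init n) = Some m /\
      [seq val a | a <- A] = [seq m i | i <- iota 1 (m 0)] /\
      size A <= trunc_log 2 n /\
      <<[set e a | a in A]>> = G.
Proof.
exists prog, 100%N, 1%N => gT G n e tab abG e_inj e_onto e_tab.
have [m run_m [A [out size_A gen_A]]] := prog_run abG e_inj e_onto e_tab.
by exists m, A.
Qed.
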